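(* Consider the relative value iteration described in the context. The function $V(z)$ associated with a belief-state $z=(\beta,r,\Delta,\tilde b)$ does not depend on the partial battery knowledge $\tilde b$; that is, $V(\beta,r,\Delta,\tilde b)=V(\beta,r,\Delta,\bar b)$ for all $\beta,r,\Delta$ and all $\tilde b,\bar b\in\{1,\dots,B\}$.
   Context: Parameters: battery capacity $B\ge1$, energy harvesting rate $\lambda\in[0,1]$, request probability $p\in[0,1]$, maximal age $\Delta^{\max}\ge2$. Belief-states are $z=(\beta,r,\Delta,\tilde b)$ with $\beta\in[0,1]^{B+1}$ a probability vector (entries indexed $0,\dots,B$), $r\in\{0,1\}$, $\Delta\in\{1,\dots,\Delta^{\max}\}$, $\tilde b\in\{1,\dots,B\}$; $\mathcal Z$ is the set of belief-states. Let $\boldsymbol\Lambda$ be the $(B+1)\times(B+1)$ matrix (indices $0,\dots,B$) with $\Lambda_{j,j}=1-\lambda$, $\Lambda_{j+1,j}=\lambda$ for $j<B$, $\Lambda_{B,B}=1$, zeros elsewhere; $\rho^0=\rho^1=(1-\lambda,\lambda,0,\dots,0)^{\mathrm T}$, and for $j=1,\dots,B$, $\rho^j$ has $1-\lambda$ at index $j-1$, $\lambda$ at index $j$, zeros elsewhere. Write $\Delta^+=\min\{\Delta+1,\Delta^{\max}\}$ and $q(r')=r'p+(1-r')(1-p)$. Relative value iteration: fix a reference $z_{\mathrm{ref}}\in\mathcal Z$, set $V^{(0)}\equiv0$, $h^{(0)}\equiv0$, and for $i\ge1$ define $Q^{(i)}(z,0)=r\Delta^+ +\sum_{r'=0}^1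 q(r')\,h^{(i-1)}(\boldsymbol\Lambda\beta,r',\Delta^+,\tilde b)$, $Q^{(i)}(z,1)=r[\beta_0\Delta^+ +(1-\beta_0)]+\beta_0\sum_{r'=0}^1q(r')\,h^{(i-1)}(\rho^0,r',\Delta^+,\tilde b)+\sum_{j=1}^B\beta_j[p\,h^{(i-1)}(\rho^j,1,1,j)+(1-p)\,h^{(i-1)}(\rho^j,0,1,j)]$, $V^{(i)}(z)=\min_{a\in\{0,1\}}Q^{(i)}(z,a)$, and $h^{(i)}(z)=V^{(i)}(z)-V^{(i)}(z_{\mathrm{ref}})$. The function $V$ is the pointwise limit $V(z)=\lim_{i\to\infty}V^{(i)}(z)$ (which the setting takes to exist). *)

From Stdlib Require Import Reals Arith Lia.
From Coquelicot Require Import Coquelicot.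
Open Scope R_scope.

(* A belief-state z = (beta, r, Delta, bt) is represented in curried form:
   beta : nat -> R  (entries indexed 0..B; entries beyond B are 0 in Z),
   r, Delta, bt : nat. *)

Definition in_Z (B Dmax : nat) (beta : nat -> R) (r D bt : nat) : Prop :=
  (forall j, (j <= B)%nat -> 0 <= beta j <= 1) /\
  (forall j, (B < j)%nat -> beta j = 0) /\
  sum_f_R0 beta B = 1 /\
  (r <= 1)%nat /\
  (1 <= D <= Dmax)%nat /\
  (1 <= bt <= B)%nat.

Definition LamE (B : nat) (lam : R) (i j : nat) : R :=
  if andb (i =? j) (j <? B) then 1 - lam
  else if andb (i =? S j) (j <? B) then lam
  else if andb (i =? B) (j =? B) then 1
  else 0.

Definition Lam_app (B : nat) (lam : R) (beta : nat -> R) : nat -> R :=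
  fun i => if (i <=? B)%nat then sum_f_R0 (fun j => LamE B lam i j * beta j) B
           else 0.

Definition rho (lam : R) (j : nat) : nat -> R :=
  fun i =>
    if (j =? 0)%nat then
      (if (i =? 0)%nat then 1 - lam else if (i =? 1)%nat then lam else 0)
    else
      (if (i =? j - 1)%nat then 1 - lam else if (i =? j)%nat then lam else 0).

Definition Dplus (Dmax D : nat) : nat := Nat.min (D + 1) Dmax.

Definition q (p : R) (r' : nat) : R := INR r' * p + (1 - INR r') * (1 - p).

Definition hfun := (nat -> R) -> nat -> nat -> nat -> R.

Definition Q0 (B Dmax : nat) (lam p : R) (h : hfun)
  (beta : nat -> R) (r D bt : nat) : R :=
  INR r * INR (Dplus Dmax D)
  + sum_f_R0 (fun r' => q p r' * h (Lam_app B lam beta) r' (Dplus Dmax D) bt) 1.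

Definition Q1 (B Dmax : nat) (lam p : R) (h : hfun)
  (beta : nat -> R) (r D bt : nat) : R :=
  INR r * (beta 0%nat * INR (Dplus Dmax D) + (1 - beta 0%nat))
  + beta 0%nat * sum_f_R0 (fun r' => q p r' * h (rho lam 0) r' (Dplus Dmax D) bt) 1
  + sum_f 1 B (fun j => beta j *
        (p * h (rho lam j) 1%nat 1%nat j + (1 - p) * h (rho lam j) 0%nat 1%nat j)).

Definition Vstep (B Dmax : nat) (lam p : R) (h : hfun) : hfun :=
  fun beta r D bt => Rmin (Q0 B Dmax lam p h beta r D bt) (Q1 B Dmax lam p h beta r D bt).

Fixpoint h_iter (B Dmax : nat) (lam p : R)
  (bref : nat -> R) (rref Dref btref : nat) (i : nat) : hfun :=
  match i with
  | O => fun _ _ _ _ => 0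
  | S k => fun beta r D bt =>
      Vstep B Dmax lam p (h_iter B Dmax lam p bref rref Dref btref k) beta r D bt
      - Vstep B Dmax lam p (h_iter B Dmax lam p bref rref Dref btref k) bref rref Dref btref
  end.

Definition V_iter (B Dmax : nat) (lam p : R)
  (bref : nat -> R) (rref Dref btref : nat) (i : nat) : hfun :=
  match i with
  | O => fun _ _ _ _ => 0
  | S k => Vstep B Dmax lam p (h_iter B Dmax lam p bref rref Dref btref k)
  end.

(* The belief component bt enters Q^(i)(z,0) and Q^(i)(z,1) only as the last
   argument passed to h^(i-1); every other occurrence of a battery level there
   (the indices j of the update terms) is independent of bt. Hence if h^(i-1)
   ignores its last argument, so do V^(i) and h^(i), and by induction every
   iterate does; the limit V inherits this by uniqueness of limits. *)

From Stdlib Require Import Reals Arith Lia.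
From Coquelicot Require Import Coquelicot.
Open Scope R_scope.

Definition bt_invariant (h : hfun) : Prop :=
  forall beta r D bt bb, h beta r D bt = h beta r D bb.

Lemma Vstep_bt_invariant B Dmax lam p (h : hfun) :
  bt_invariant h -> bt_invariant (Vstep B Dmax lam p h).
Proof.
  intros Hh beta r D bt bb; unfold Vstep, Q0, Q1; cbn [sum_f_R0].
  now rewrite !(Hh _ _ _ bt bb).
Qed.

Lemma h_iter_bt_invariant B Dmax lam p bref rref Dref btref k :
  bt_invariant (h_iter B Dmax lam p bref rref Dref btref k).
Proof.
  induction k as [|k IH]; intros beta r D bt bb; simpl; [reflexivity|].
  now rewrite (Vstep_bt_invariant _ _ _ _ _ IH beta r D bt bb).
Qed.

Lemma V_iter_bt_invariant B Dmax lam p bref rref Dref btref k :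
  bt_invariant (V_iter B Dmax lam p bref rref Dref btref k).
Proof.
  destruct k as [|k]; intros beta r D bt bb; simpl; [reflexivity|].
  apply Vstep_bt_invariant, h_iter_bt_invariant.
Qed.

Lemma in_Z_change_bt B Dmax beta r D bt bb :
  in_Z B Dmax beta r D bt -> (1 <= bb <= B)%nat -> in_Z B Dmax beta r D bb.
Proof. unfold in_Z; tauto. Qed.

Theorem theorem3 (B Dmax : nat) (lam p : R)
  (HB : (1 <= B)%nat) (Hlam : 0 <= lam <= 1) (Hp : 0 <= p <= 1) (HD : (2 <= Dmax)%nat)
  (bref : nat -> R) (rref Dref btref : nat)
  (Href : in_Z B Dmax bref rref Dref btref)
  (V : (nat -> R) -> nat -> nat -> nat -> R)
  (HV : forall beta r D bt, in_Z B Dmax beta r D bt ->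
        is_lim_seq (fun i => V_iter B Dmax lam p bref rref Dref btref i beta r D bt)
                   (Finite (V beta r D bt))) :
  forall (beta : nat -> R) (r D bt bb : nat),
    in_Z B Dmax beta r D bt -> (1 <= bb <= B)%nat ->
    V beta r D bt = V beta r D bb.
Proof.
  intros beta r D bt bb Hz Hbb.
  pose proof (HV _ _ _ _ Hz) as Hlim_bt.
  pose proof (HV _ _ _ _ (in_Z_change_bt _ _ _ _ _ _ _ Hz Hbb)) as Hlim_bb.
  apply (is_lim_seq_ext _ _ _
           (fun i => V_iter_bt_invariant B Dmax lam p bref rref Dref btref i beta r D bt bb))
    in Hlim_bt.
  apply is_lim_seq_unique in Hlim_bt, Hlim_bb.
  rewrite Hlim_bt in Hlim_bb.
  now injection Hlim_bb.
Qed.
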